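(* Let $t\geq 4$ with $t\equiv 0\pmod 4$. Then the multiset $\{1,2^b,t^c\}$ admits a linear realization for every integer $b\geq t-2$ and every positive odd integer $c$.
   Context: $\{1,2^b,t^{c}\}$ is the multiset with one $1$, $b$ copies of $2$ and $c$ copies of $t$. For a multiset $L$ of positive integers with $|L|=v-1$, each at most $v-1$, a linear realization of $L$ is a Hamiltonian path $[x_0,\dots,x_{v-1}]$ of the complete graph on $\{0,\dots,v-1\}$ such that the multiset $\{|x_i-x_{i+1}| : i=0,\dots,v-2\}$ equals $L$. *)

From mathcomp Require Import all_boot.
Set Implicit Arguments. Unset Strict Implicit. Unset Printing Implicit Defensive.

Definition absdiff (m n : nat) : nat := if m <= n then n - m else m - n.

Definition path_diffs (s : seq nat) : seq nat :=
  [seq absdiff p.1 p.2 | p <- zip s (behead s)].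

(* A linear realization of the multiset L (a seq nat up to permutation) on
   vertex set {0,...,v-1}: a Hamiltonian path of K_v, i.e. an ordering s of
   {0,..,v-1}, whose multiset of edge lengths equals L. *)
Definition linear_realization (v : nat) (L : seq nat) (s : seq nat) : Prop :=
  perm_eq s (iota 0 v) /\ perm_eq (path_diffs s) L.

Definition ms_1_2_t (b t c : nat) : seq nat := 1 :: nseq b 2 ++ nseq c t.

(* Put h = t/2.  Laying out [0, M) (M >= h) as the h residue classes mod h and
   snaking through them two columns at a time -- down one column, a step of 1
   along the bottom, up the next, a step of 1 along the top to the following pair
   -- realizes {1^(h-1), h^(M-h)} with a path ending at M - 1; appending
   M, ..., m - 1 adds further ones.  Doubling one such path onto the even
   vertices and another, reversed, onto the odd vertices, joined by an edge of
   length 1 between their tops, turns the lengths 1, h into 2, t.  The c edges of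
   length t are split as (c+1)/2 + (c-1)/2 between the halves, and b >= t - 2
   leaves room for the h - 1 ones each half needs. *)

From mathcomp Require Import all_boot zify.
Set Implicit Arguments. Unset Strict Implicit. Unset Printing Implicit Defensive.

Lemma absdiffC m n : absdiff m n = absdiff n m.
Proof. by rewrite /absdiff; case: (leqP m n); case: (leqP n m); lia. Qed.

Lemma absdiff_succ m : absdiff m m.+1 = 1.
Proof. by rewrite /absdiff leqnSn subSnn. Qed.

Lemma absdiff_affine a k m n : absdiff (a + k * m) (a + k * n) = k * absdiff m n.
Proof.
rewrite /absdiff leq_add2l !subnDl -!mulnBr leq_mul2l.
by case: k => [|k] /=; [rewrite !mul0n | case: leqP].
Qed.

Lemma absdiff_double m n : absdiff m.*2 n.*2 = (absdiff m n).*2.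
Proof. by rewrite /absdiff leq_double; case: ifP; rewrite doubleB. Qed.

Lemma absdiff_double_succ m n : absdiff m.*2.+1 n.*2.+1 = (absdiff m n).*2.
Proof. by rewrite /absdiff !ltnS !subSS leq_double; case: ifP; rewrite doubleB. Qed.

Lemma last_rev (T : Type) (x0 : T) s : last x0 (rev s) = head x0 s.
Proof. by case: s => //= x s; rewrite rev_cons last_rcons. Qed.

Lemma head_rev (T : Type) (x0 : T) s : head x0 (rev s) = last x0 s.
Proof. by rewrite -[in RHS](revK s) last_rev. Qed.

Lemma head_cat_nonnil (T : eqType) (x0 : T) s1 s2 :
  s1 != [::] -> head x0 (s1 ++ s2) = head x0 s1.
Proof. by case: s1. Qed.

Lemma last_cat_nonnil (T : eqType) (x0 : T) s1 s2 :
  s2 != [::] -> last x0 (s1 ++ s2) = last x0 s2.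
Proof. by case: s2 => // y s2 _; rewrite last_cat. Qed.

Lemma last_map_nonnil (T : eqType) (U : Type) (f : T -> U) x0 y0 (s : seq T) :
  s != [::] -> last y0 (map f s) = f (last x0 s).
Proof. by case: s => //= x s _; rewrite last_map. Qed.

Lemma iotaSr m n : iota m n.+1 = rcons (iota m n) (m + n).
Proof. by rewrite -[n.+1]addn1 iotaD cats1. Qed.

Lemma path_diffs_cons2 x y s :
  path_diffs [:: x, y & s] = absdiff x y :: path_diffs (y :: s).
Proof. by []. Qed.

Lemma size_path_diffs s : size (path_diffs s) = (size s).-1.
Proof. rewrite /path_diffs size_map size_zip size_behead; lia. Qed.

Lemma path_diffs_cat s1 s2 : s1 != [::] -> s2 != [::] ->
  path_diffs (s1 ++ s2) =
  path_diffs s1 ++ absdiff (last 0 s1) (head 0 s2) :: path_diffs s2.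
Proof.
case: s1 => // x s1; case: s2 => // y s2 _ _.
elim: s1 x => [|z s1 IH] x //.
by rewrite cat_cons path_diffs_cons2 IH.
Qed.

Lemma path_diffs_rev s : path_diffs (rev s) = rev (path_diffs s).
Proof.
elim: s => [|x [|y s] IH] //.
rewrite rev_cons -cats1 path_diffs_cat ?IH ?last_rev //; last by rewrite -size_eq0 size_rev.
by rewrite path_diffs_cons2 rev_cons -cats1 absdiffC.
Qed.

Lemma path_diffs_map f g s :
  (forall m n, absdiff (f m) (f n) = g (absdiff m n)) ->
  path_diffs (map f s) = map g (path_diffs s).
Proof.
move=> fg; elim: s => [|x [|y s] IH] //.
by rewrite map_cons map_cons path_diffs_cons2 -map_cons IH fg.
Qed.

Lemma path_diffs_iota a n : path_diffs (iota a n) = nseq n.-1 1.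
Proof.
elim: n a => [|[|n] IH] a //.
by rewrite [iota a _]/= path_diffs_cons2 IH absdiff_succ.
Qed.

Lemma count_mem2 (T : eqType) (x y : T) l : x != y ->
  all [pred d | (d == x) || (d == y)] l -> count_mem x l + count_mem y l = size l.
Proof.
move=> neq_xy; elim: l => //= z l IH /andP[/orP[]/eqP-> {z} /IH size_l].
  by rewrite eqxx (negbTE neq_xy) -size_l /=; lia.
by rewrite eqxx eq_sym (negbTE neq_xy) -size_l /=; lia.
Qed.

Lemma perm_nseq2 (T : eqType) (x y : T) l : x != y ->
  all [pred d | (d == x) || (d == y)] l ->
  perm_eq l (nseq (count_mem x l) x ++ nseq (count_mem y l) y).
Proof.
move=> neq_xy; elim: l => //= z l IH /andP[/orP[]/eqP-> {z} /IH perm_l].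
  by rewrite eqxx (negbTE neq_xy) /= perm_cons.
rewrite eqxx eq_sym (negbTE neq_xy) /= perm_sym -cat1s perm_catCA /= perm_cons.
by rewrite perm_sym.
Qed.

Lemma linear_realization_nonnil v L s : 0 < v -> linear_realization v L s -> s != [::].
Proof. by move=> v_gt0 [perm_s _]; rewrite -size_eq0 (perm_size perm_s) size_iota -lt0n. Qed.

Lemma linear_realization_perm v L L' s :
  perm_eq L L' -> linear_realization v L s -> linear_realization v L' s.
Proof. by move=> perm_L [perm_s diffs_s]; split; last exact: perm_trans perm_L. Qed.

Lemma linear_realization_extend M m L s : 0 < M <= m ->
  linear_realization M L s -> last 0 s = M.-1 ->
  linear_realization m (L ++ nseq (m - M) 1) (s ++ iota M (m - M)) /\
  last 0 (s ++ iota M (m - M)) = m.-1.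
Proof.
move=> /andP[M_gt0 le_Mm] real_s last_s.
have s_nil := linear_realization_nonnil M_gt0 real_s.
case: real_s => perm_s diffs_s.
case def_n: (m - M) => [|n].
  have -> : m = M by lia.
  by rewrite /= !cats0.
split; first split.
- by rewrite -(subnKC le_Mm) iotaD def_n perm_cat2r.
- rewrite path_diffs_cat // last_s path_diffs_iota /= -{2}(prednK M_gt0) absdiff_succ.
  exact: perm_cat.
- by rewrite iotaSr last_cat last_rcons; lia.
Qed.

Lemma perm_iota_double M N : N <= M <= N.+1 ->
  perm_eq ([seq x.*2 | x <- iota 0 M] ++ [seq x.*2.+1 | x <- iota 0 N]) (iota 0 (M + N)).
Proof.
move=> bounds; apply: uniq_perm; rewrite ?iota_uniq //.
  rewrite cat_uniq !map_inj_uniq ?iota_uniq //=; last first.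
  - exact: double_inj.
  - by move=> m n [] /double_inj.
  rewrite andbT; apply/hasPn => _ /mapP[x _ ->]; apply/negP => /mapP[y _] /(congr1 odd).
  by rewrite /= !odd_double.
move=> x; rewrite mem_cat mem_iota; apply/orP/idP.
  by case=> /mapP[y]; rewrite mem_iota => y_lt ->; lia.
move=> x_lt; have := odd_double_half x; case: (odd x) => /= def_x; [right | left].
  by apply/mapP; exists x./2; rewrite ?mem_iota; lia.
by apply/mapP; exists x./2; rewrite ?mem_iota; lia.
Qed.

Lemma linear_realization_interleave mA mB LA LB sA sB :
  mB <= mA <= mB.+1 -> 0 < mB ->
  linear_realization mA LA sA -> last 0 sA = mA.-1 ->
  linear_realization mB LB sB -> last 0 sB = mB.-1 ->
  linear_realization (mA + mB) (1 :: map double LA ++ map double LB)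
    ([seq x.*2 | x <- sA] ++ rev [seq x.*2.+1 | x <- sB]).
Proof.
move=> bounds mB_gt0 real_sA last_sA real_sB last_sB.
have sA_nil := linear_realization_nonnil (leq_trans mB_gt0 (proj1 (andP bounds))) real_sA.
have sB_nil := linear_realization_nonnil mB_gt0 real_sB.
case: real_sA real_sB => [perm_sA diffs_sA] [perm_sB diffs_sB].
split.
  apply: perm_trans (perm_iota_double bounds).
  by rewrite perm_cat ?perm_rev ?perm_map.
rewrite path_diffs_cat; last 2 first.
- by rewrite -size_eq0 size_map size_eq0.
- by rewrite -size_eq0 size_rev size_map size_eq0.
rewrite head_rev !(last_map_nonnil _ 0) // last_sA last_sB path_diffs_rev.
rewrite !(@path_diffs_map _ double); last 2 first.
- exact: absdiff_double_succ.
- exact: absdiff_double.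
have -> : absdiff (mA.-1).*2 (mB.-1).*2.+1 = 1 by rewrite /absdiff; case: leqP; lia.
rewrite -cat1s perm_catCA /= perm_cons.
by rewrite perm_cat ?perm_rev ?perm_map.
Qed.

Lemma double_modn_succ p H : (p.+1 %% H).*2 = p.*2.+2 %% (2 * H).
Proof. by rewrite -mul2n muln_modr mul2n doubleS. Qed.

Lemma path_succ_modn_iota H a n :
  a + n < H -> path (fun p q => q == p.+1 %% H) a (iota a.+1 n).
Proof.
elim: n a => //= n IH a lt_aH; rewrite (modn_small (_ : a.+1 < H)) ?eqxx ?IH //; lia.
Qed.

Lemma cycle_succ_modn_iota H : cycle (fun p q => q == p.+1 %% H) (iota 0 H).
Proof.
case: H => [|H] //=; rewrite rcons_path path_succ_modn_iota //=.
by case: H => [|H] //; rewrite iotaSr last_rcons add1n modnn.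
Qed.

Lemma cyclic_order H p : p < H -> exists ps, [/\ perm_eq (p :: ps) (iota 0 H),
  path (fun p q => q == p.+1 %% H) p ps & p = (last p ps).+1 %% H].
Proof.
move=> p_lt; have [ps rot_p] : exists ps, rot p (iota 0 H) = p :: ps.
  rewrite /rot drop_iota add0n.
  by case def_m: (H - p) => [|m]; [lia | eexists].
have := cycle_succ_modn_iota H; rewrite -(rot_cycle p) rot_p /= rcons_path.
case/andP=> path_ps /eqP last_ps; exists ps; split=> //.
by rewrite -rot_p perm_rot.
Qed.

Section Snake.

Variables H Q r : nat.
Hypotheses (H_gt0 : 0 < H) (Q_gt0 : 0 < Q) (r_lt_h : r < 2 * H).

Local Notation h := (2 * H).
Local Notation N := (Q * h + r).

Definition height k := if k < r then Q.+1 else Q.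
Definition column k := [seq k + h * j | j <- iota 0 (height k)].
Definition top k := k + h * (height k).-1.

Lemma height_gt0 k : 0 < height k.
Proof. by rewrite /height; case: ifP. Qed.

Lemma column_nil k : column k != [::].
Proof. by rewrite -size_eq0 size_map size_iota -lt0n height_gt0. Qed.

Lemma head_column k : head 0 (column k) = k.
Proof. by rewrite /column; case: height (height_gt0 k) => //= n _; rewrite muln0 addn0. Qed.

Lemma last_column k : last 0 (column k) = top k.
Proof.
rewrite /column /top; case: height (height_gt0 k) => // n _.
by rewrite iotaSr map_rcons last_rcons.
Qed.

Lemma mem_column k x : k < h -> (x \in column k) = (x < N) && (x %% h == k).
Proof.
move=> k_lt; apply/mapP/andP.
  move=> [j]; rewrite mem_iota add0n /height => j_lt ->; split.
    by case: ifP j_lt => k_r j_lt; nia.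
  by rewrite addnC mulnC modnMDl modn_small.
move=> [x_lt /eqP x_mod]; exists (x %/ h); last by rewrite {1}(divn_eq x h) x_mod mulnC addnC.
have def_x : x = x %/ h * h + k by rewrite {1}(divn_eq x h) x_mod.
by rewrite mem_iota add0n /height; case: ifP => k_r; nia.
Qed.

Lemma column_uniq k : uniq (column k).
Proof.
rewrite map_inj_uniq ?iota_uniq // => i j /addnI /eqP.
by rewrite eqn_pmul2l ?muln_gt0 // => /eqP.
Qed.

Lemma path_diffs_column k : path_diffs (column k) = nseq (height k).-1 h.
Proof.
rewrite (@path_diffs_map _ (muln h)) ?path_diffs_iota ?map_nseq ?muln1 //.
by move=> m n; rewrite absdiff_affine.
Qed.

Lemma top_succ k : k < h -> k.+1 %% h != r -> top (k.+1 %% h) = (top k).+1.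
Proof.
move=> k_lt; rewrite /top /height.
have [k1_lt | k1_ge] := ltnP k.+1 h.
  by rewrite modn_small // => k1_r; case: ifP => ?; case: ifP => ?; nia.
have -> : k.+1 = h by lia.
by rewrite modnn => r_nz; case: ifP => ?; case: ifP => ?; nia.
Qed.

Lemma top_pred k : k < h -> k.+1 %% h = r -> top k = N.-1.
Proof.
move=> k_lt; rewrite /top /height.
have [k1_lt | k1_ge] := ltnP k.+1 h.
  by rewrite modn_small // => k1_r; case: ifP => ?; nia.
have -> : k.+1 = h by lia.
by rewrite modnn => r_0; case: ifP => ?; nia.
Qed.

Definition column_pair p := rev (column p.*2) ++ column p.*2.+1.

Lemma column_pair_nil p : column_pair p != [::].
Proof. by rewrite -size_eq0 size_cat addn_eq0 !size_eq0 negb_and column_nil orbT. Qed.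

Lemma head_column_pair p : head 0 (column_pair p) = top p.*2.
Proof.
rewrite head_cat_nonnil ?head_rev ?last_column //.
by rewrite -size_eq0 size_rev size_eq0 column_nil.
Qed.

Lemma last_column_pair p : last 0 (column_pair p) = top p.*2.+1.
Proof. by rewrite last_cat_nonnil ?last_column ?column_nil. Qed.

Lemma mem_column_pair p x : p < H ->
  (x \in column_pair p) = (x < N) && ((x %% h)./2 == p).
Proof.
by move=> p_lt; rewrite mem_cat mem_rev !mem_column; lia.
Qed.

Lemma column_pair_uniq p : p < H -> uniq (column_pair p).
Proof.
move=> p_lt; rewrite cat_uniq rev_uniq !column_uniq /= andbT.
by apply/hasPn => x; rewrite mem_rev !mem_column; lia.
Qed.

Lemma path_diffs_column_pair p :
  path_diffs (column_pair p) = nseq (height p.*2).-1 h ++ 1 :: nseq (height p.*2.+1).-1 h.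
Proof.
rewrite path_diffs_cat ?column_nil //; last by rewrite -size_eq0 size_rev size_eq0 column_nil.
by rewrite path_diffs_rev last_rev !head_column absdiff_succ !path_diffs_column rev_nseq.
Qed.

Lemma column_pair_steps p :
  all [pred d | (d == 1) || (d == h)] (path_diffs (column_pair p)) /\
  count_mem 1 (path_diffs (column_pair p)) = 1.
Proof.
have h_neq1 : (h == 1) = false by apply/eqP; lia.
rewrite path_diffs_column_pair -[1 :: _]cat1s !all_cat !count_cat !all_nseq !count_nseq /=.
by rewrite h_neq1 eqxx !orbT !mul0n.
Qed.

Definition snake ps := flatten [seq column_pair p | p <- ps].

Lemma snake_cons p ps : snake (p :: ps) = column_pair p ++ snake ps.
Proof. by []. Qed.

Lemma snake_nil p ps : snake (p :: ps) != [::].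
Proof. by rewrite snake_cons -size_eq0 size_cat addn_eq0 !size_eq0 negb_and column_pair_nil. Qed.

Lemma head_snake p ps : head 0 (snake (p :: ps)) = top p.*2.
Proof. by rewrite snake_cons head_cat_nonnil ?column_pair_nil ?head_column_pair. Qed.

Lemma last_snake p ps : last 0 (snake (p :: ps)) = top (last p ps).*2.+1.
Proof.
elim: ps p => [|q ps IH] p; first by rewrite snake_cons cats0 last_column_pair.
by rewrite snake_cons last_cat_nonnil ?snake_nil ?IH.
Qed.

Lemma mem_snake ps x : all (fun p => p < H) ps ->
  (x \in snake ps) = (x < N) && ((x %% h)./2 \in ps).
Proof.
elim: ps => [|p ps IH] /=; first by rewrite andbF.
by case/andP=> p_lt /IH mem_ps; rewrite mem_cat mem_ps mem_column_pair // in_cons andb_orr.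
Qed.

Lemma snake_uniq ps : all (fun p => p < H) ps -> uniq ps -> uniq (snake ps).
Proof.
elim: ps => //= p ps IH /andP[p_lt all_ps] /andP[p_notin uniq_ps].
rewrite cat_uniq column_pair_uniq // IH // andbT.
apply/hasPn => x; rewrite mem_snake // mem_column_pair // => /andP[_ x_in].
by apply/negP => /andP[_ /eqP x_p]; move: p_notin; rewrite -x_p x_in.
Qed.

Lemma perm_snake ps : perm_eq ps (iota 0 H) -> perm_eq (snake ps) (iota 0 N).
Proof.
move=> perm_ps.
have all_ps : all (fun p => p < H) ps by apply/allP => p; rewrite (perm_mem perm_ps) mem_iota.
apply: uniq_perm; rewrite ?iota_uniq ?snake_uniq ?(perm_uniq perm_ps) ?iota_uniq //.
move=> x; rewrite mem_snake // (perm_mem perm_ps) !mem_iota /=.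
by have := ltn_pmod x (_ : 0 < h); case: (x < N) => //=; lia.
Qed.

Lemma snake_steps p ps : all (fun p => p < H) (p :: ps) ->
  path (fun p q => q == p.+1 %% H) p ps -> all (fun q => q.*2 != r) ps ->
  all [pred d | (d == 1) || (d == h)] (path_diffs (snake (p :: ps))) /\
  count_mem 1 (path_diffs (snake (p :: ps))) = (size ps).*2.+1.
Proof.
elim: ps p => [|q ps IH] p; first by rewrite snake_cons cats0 => *; apply: column_pair_steps.
move=> /andP[p_lt all_qps] /andP[/eqP q_succ path_qps] /andP[q_r all_ps].
have [all_rest count_rest] := IH q all_qps path_qps all_ps.
have [all_pair count_pair] := column_pair_steps p.
have top_q : top q.*2 = (top p.*2.+1).+1.
  rewrite q_succ -top_succ ?double_modn_succ //; first by lia.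
  by rewrite -double_modn_succ -q_succ.
rewrite snake_cons path_diffs_cat ?column_pair_nil ?snake_nil //.
rewrite last_column_pair head_snake top_q absdiff_succ -[1 :: _]cat1s !all_cat !count_cat.
by rewrite all_pair all_rest count_pair count_rest /=.
Qed.

End Snake.

Lemma exists_linear_realization_1_h H M : 0 < H -> 2 * H <= M ->
  exists s, linear_realization M (nseq (2 * H).-1 1 ++ nseq (M - 2 * H) (2 * H)) s /\
            last 0 s = M.-1.
Proof.
move=> H_gt0 le_hM; set Q := M %/ (2 * H); set r := M %% (2 * H).
have r_lt : r < 2 * H by rewrite ltn_pmod // muln_gt0.
have Q_gt0 : 0 < Q by rewrite divn_gt0 // muln_gt0.
have def_M : M = Q * (2 * H) + r by apply: divn_eq.
set p0 := r./2; have p0_lt : p0 < H by lia.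
have [ps [perm_ps path_ps last_ps]] := cyclic_order p0_lt.
have all_ps : all (fun p => p < H) (p0 :: ps).
  by apply/allP => p; rewrite (perm_mem perm_ps) mem_iota.
(* Only the junction into column r joins tops that are not adjacent.  For even r
   the cyclic order starting at pair r/2 never uses it; for odd r column r is
   entered at the bottom, inside pair r/2, and the reversed snake ends at the top
   of column r - 1, which is M - 1. *)
have ps_ne_r : all (fun q => q.*2 != r) ps.
  apply/allP => q q_in; apply/negP => /eqP q_r.
  have r_even : ~~ odd r by rewrite -q_r odd_double.
  have : p0 \notin ps by have := perm_uniq perm_ps; rewrite iota_uniq /= => /andP[].
  by rewrite (_ : p0 = q) ?q_in //; lia.
have [steps count_1] := snake_steps H_gt0 Q_gt0 r_lt all_ps path_ps ps_ne_r.
set s0 := snake H Q r (p0 :: ps) in steps count_1.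
have perm_s0 : perm_eq s0 (iota 0 M) by rewrite def_M perm_snake.
have [s [perm_s diffs_s last_s]] : exists s, [/\ perm_eq s (iota 0 M),
    perm_eq (path_diffs s) (path_diffs s0) & last 0 s = M.-1].
  case: (boolP (odd r)) => r_odd.
    exists (rev s0); rewrite path_diffs_rev !perm_rev last_rev head_snake //.
    by split=> //; rewrite def_M; apply: top_pred; rewrite ?modn_small; lia.
  exists s0; split=> //; rewrite last_snake // def_M.
  have last_lt : last p0 ps < H by apply: (allP all_ps); rewrite mem_last.
  by apply: top_pred; rewrite -?double_modn_succ -?last_ps; lia.
have neq_1h : 1 != 2 * H by lia.
have count_1h : count_mem 1 (path_diffs s0) = (2 * H).-1.
  by rewrite count_1; have := perm_size perm_ps; rewrite size_iota /=; lia.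
have count_h : count_mem (2 * H) (path_diffs s0) = M - 2 * H.
  have := count_mem2 neq_1h steps.
  by rewrite size_path_diffs (perm_size perm_s0) size_iota count_1h; lia.
exists s; split => //; split => //.
rewrite -count_1h -count_h; exact: perm_trans diffs_s (perm_nseq2 neq_1h steps).
Qed.

Theorem proposition3p10 (t b c : nat) :
  4 <= t -> t %% 4 = 0 -> t - 2 <= b -> odd c ->
  exists s : seq nat,
    linear_realization (size (ms_1_2_t b t c)).+1 (ms_1_2_t b t c) s.
Proof.
move=> t_ge4 t_mod4 le_b c_odd; set H := t %/ 4.
have def_t : t = (2 * H).*2 by lia.
have H_gt0 : 0 < H by lia.
set v := (size (ms_1_2_t b t c)).+1.
have def_v : v = b + c + 2 by rewrite /v /= size_cat !size_nseq; lia.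
have def_c : c = (c./2).*2.+1 by rewrite -[c in LHS](odd_double_half c) c_odd.
(* The even half carries one more edge of length t than the odd half. *)
set mB := v./2; set mA := v - mB; set MB := 2 * H + c./2; set MA := MB.+1.
have [hMA hMB] : 2 * H <= MA /\ 2 * H <= MB by lia.
have [MA_mA MB_mB] : 0 < MA <= mA /\ 0 < MB <= mB by lia.
have [mA_mB mB_gt0] : mB <= mA <= mB.+1 /\ 0 < mB by lia.
have [sA [real_sA last_sA]] := exists_linear_realization_1_h H_gt0 hMA.
have [sB [real_sB last_sB]] := exists_linear_realization_1_h H_gt0 hMB.
have [real_sA' last_sA'] := linear_realization_extend MA_mA real_sA last_sA.
have [real_sB' last_sB'] := linear_realization_extend MB_mB real_sB last_sB.
have := linear_realization_interleave mA_mB mB_gt0 real_sA' last_sA' real_sB' last_sB'.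
rewrite (_ : mA + mB = v); last by lia.
move=> /linear_realization_perm real; eexists; apply: real.
rewrite /ms_1_2_t perm_cons; apply/permP => a.
rewrite !map_cat !map_nseq !count_cat !count_nseq -def_t (_ : 1.*2 = 2) //.
have -> : b = (2 * H).-1 + (mA - MA) + ((2 * H).-1 + (mB - MB)) by lia.
have -> : c = (MA - 2 * H) + (MB - 2 * H) by lia.
rewrite !mulnDr; lia.
Qed.
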